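(* Let $\mathbf{w}^t\in\mathbb{R}^d$, let $\theta_1^t\le\theta_2^t\le\dots\le\theta_{K-1}^t$ be real thresholds, let $\mathbf{x}^t\in\mathbb{R}^d$ and let $1\le y_l^t\le y_r^t\le K$ be integers. Let $(\mathbf{w}^{t+1},\boldsymbol\theta^{t+1})$ be the PA update, i.e. the unique minimizer over $\mathbf{w}\in\mathbb{R}^d,\boldsymbol\theta\in\mathbb{R}^{K-1}$ of $$\tfrac12\Vert\mathbf{w}-\mathbf{w}^t\Vert^2+\tfrac12\Vert\boldsymbol\theta-\boldsymbol\theta^t\Vert^2$$ subject to $\mathbf{w}\cdot\mathbf{x}^t-\theta_i\ge 1$ for $i=1,\dots,y_l^t-1$ and $\mathbf{w}\cdot\mathbf{x}^t-\theta_i\le -1$ for $i=y_r^t,\dots,K-1$. Then $\theta_1^{t+1}\le\theta_2^{t+1}\le\dots\le\theta_{K-1}^{t+1}$.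
   Context: Online ranking into $K$ ordered classes: a ranker is $(\mathbf{w},\boldsymbol\theta)$ with $\boldsymbol\theta=(\theta_1,\dots,\theta_{K-1})$, predicting $h(\mathbf{x})=\min\{i\in\{1,\dots,K\}:\mathbf{w}\cdot\mathbf{x}-\theta_i<0\}$ with $\theta_K=\infty$. At trial $t$ an example $\mathbf{x}^t$ with interval label $[y_l^t,y_r^t]$ is received and the passive-aggressive (PA) algorithm updates $(\mathbf{w}^t,\boldsymbol\theta^t)$ to the exact solution of the stated quadratic program. *)

From HB Require Import structures.
From mathcomp Require Import all_boot all_order all_algebra.
From mathcomp Require Import reals.
Set Implicit Arguments. Unset Strict Implicit. Unset Printing Implicit Defensive.
Import Order.TTheory GRing.Theory Num.Theory.
Local Open Scope ring_scope.

Definition dotv (R : realType) (n : nat) (u v : 'rV[R]_n) : R :=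
  \sum_(k < n) u 0 k * v 0 k.

Definition sqnorm (R : realType) (n : nat) (u : 'rV[R]_n) : R := dotv u u.

Definition pa_objective (R : realType) (d m : nat)
  (wt : 'rV[R]_d) (tht : 'rV[R]_m) (w : 'rV[R]_d) (th : 'rV[R]_m) : R :=
  2^-1 * sqnorm (w - wt) + 2^-1 * sqnorm (th - tht).

(* Thresholds theta_1..theta_{K-1} are stored 0-based: theta_i = th 0 j with i = j+1.
   Constraints: w.x - theta_i >= 1 for i = 1..yl-1,
                w.x - theta_i <= -1 for i = yr..K-1. *)
Definition pa_feasible (R : realType) (d K : nat) (x : 'rV[R]_d) (yl yr : nat)
  (w : 'rV[R]_d) (th : 'rV[R]_(K.-1)) : Prop :=
  forall j : 'I_(K.-1),
    ((j.+1 <= yl - 1)%N -> dotv w x - th 0 j >= 1) /\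
    ((yr <= j.+1)%N -> dotv w x - th 0 j <= -1).
Arguments pa_feasible {R d} K x yl yr w th.

Definition pa_update (R : realType) (d K : nat) (wt : 'rV[R]_d) (tht : 'rV[R]_(K.-1))
  (x : 'rV[R]_d) (yl yr : nat) (w' : 'rV[R]_d) (th' : 'rV[R]_(K.-1)) : Prop :=
  pa_feasible K x yl yr w' th' /\
  forall (w : 'rV[R]_d) (th : 'rV[R]_(K.-1)), pa_feasible K x yl yr w th ->
    pa_objective wt tht w' th' <= pa_objective wt tht w th.
Arguments pa_update {R d} K wt tht x yl yr w' th'.

Definition thresholds_sorted (R : realType) (m : nat) (th : 'rV[R]_m) : Prop :=
  forall i j : 'I_m, (i <= j)%N -> th 0 i <= th 0 j.

(* If the update had an inverted pair th'_i > th'_j with i < j, replacing both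
   thresholds by their midpoint would keep every constraint satisfied (the
   constraints of type ">= 1" concern a prefix of the thresholds, those of type
   "<= -1" a suffix) and, because the previous thresholds are sorted, would
   strictly decrease the distance to them, contradicting minimality. *)
From HB Require Import structures.
From mathcomp Require Import all_boot all_order all_algebra.
From mathcomp Require Import reals.
From mathcomp Require Import ring lra.
Set Implicit Arguments. Unset Strict Implicit. Unset Printing Implicit Defensive.
Import Order.TTheory GRing.Theory Num.Theory.
Local Open Scope ring_scope.

Section Pooling.

Variable R : realType.

Lemma sqnorm_subE n (u v : 'rV[R]_n) :
  sqnorm (u - v) = \sum_k (u 0 k - v 0 k) ^+ 2.
Proof. by apply: eq_bigr => k _; rewrite !mxE. Qed.

Lemma sumr_sub_pair n (F G : 'I_n -> R) (i j : 'I_n) :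
  i != j -> (forall k, k != i -> k != j -> F k = G k) ->
  \sum_k F k - \sum_k G k = F i + F j - (G i + G j).
Proof.
move=> nij FG.
have split2 (H : 'I_n -> R) :
    \sum_k H k = H i + H j + \sum_(k | (k != i) && (k != j)) H k.
  by rewrite (bigD1 i) //= (bigD1 j) 1?eq_sym //= addrA.
rewrite !split2 (eq_bigr G) => [|k /andP[ki kj]]; last exact: FG.
ring.
Qed.

Lemma midpoint_sqdist_lt (a b ta tb : R) :
  ta <= tb -> b < a ->
  ((a + b) / 2 - ta) ^+ 2 + ((a + b) / 2 - tb) ^+ 2 < (a - ta) ^+ 2 + (b - tb) ^+ 2.
Proof.
move=> le_t lt_ba.
have -> : (a - ta) ^+ 2 + (b - tb) ^+ 2 =
    ((a + b) / 2 - ta) ^+ 2 + ((a + b) / 2 - tb) ^+ 2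
    + ((a - b) ^+ 2 / 2 + (a - b) * (tb - ta)) by field.
rewrite ltrDl; apply: ltr_pwDl; last by apply: mulr_ge0; lra.
by rewrite divr_gt0 // exprn_gt0 // subr_gt0.
Qed.

Definition pool_pair m (th : 'rV[R]_m) (i j : 'I_m) : 'rV[R]_m :=
  \row_k (if (k == i) || (k == j) then (th 0 i + th 0 j) / 2 else th 0 k).

Lemma pool_pair_sqdist_lt m (th tht : 'rV[R]_m) (i j : 'I_m) :
  i != j -> tht 0 i <= tht 0 j -> th 0 j < th 0 i ->
  sqnorm (pool_pair th i j - tht) < sqnorm (th - tht).
Proof.
move=> nij le_t lt_th; rewrite -subr_gt0 !sqnorm_subE.
rewrite (@sumr_sub_pair _ _ (fun k => (pool_pair th i j 0 k - tht 0 k) ^+ 2) i j) //;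
  last by move=> k ki kj; rewrite mxE (negbTE ki) (negbTE kj).
rewrite !mxE !eqxx orbT /= subr_gt0.
exact: midpoint_sqdist_lt.
Qed.

Lemma pool_pair_feasible d K (x w : 'rV[R]_d) yl yr (th : 'rV[R]_K.-1)
    (i j : 'I_K.-1) :
  (i <= j)%N -> th 0 j <= th 0 i ->
  pa_feasible K x yl yr w th -> pa_feasible K x yl yr w (pool_pair th i j).
Proof.
move=> le_ij le_th feas k; have le_ij1 : (i.+1 <= j.+1)%N by rewrite ltnS.
rewrite mxE.
have [/= ->|_] := eqVneq k i.
  split=> [/(proj1 (feas i))|le_yr]; first lra.
  by have := proj2 (feas j) (leq_trans le_yr le_ij1); lra.
have [/= ->|_] := eqVneq k j; last exact: feas.
split=> [le_yl|/(proj2 (feas j))]; last lra.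
by have := proj1 (feas i) (leq_trans le_ij1 le_yl); lra.
Qed.

End Pooling.

Theorem theorem1 (R : realType) (d K : nat)
  (wt : 'rV[R]_d) (tht : 'rV[R]_(K.-1)) (x : 'rV[R]_d) (yl yr : nat)
  (w' : 'rV[R]_d) (th' : 'rV[R]_(K.-1)) :
  thresholds_sorted tht ->
  (1 <= yl)%N -> (yl <= yr)%N -> (yr <= K)%N ->
  pa_update K wt tht x yl yr w' th' ->
  thresholds_sorted th'.
Proof.
move=> sorted_t _ _ _ [feas minimal] i j le_ij.
rewrite leNgt; apply/negP => inverted.
have nij : i != j by apply: contraTneq inverted => ->; rewrite ltxx.
have := minimal w' (pool_pair th' i j)
  (pool_pair_feasible le_ij (ltW inverted) feas).
have := pool_pair_sqdist_lt nij (sorted_t i j le_ij) inverted.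
rewrite /pa_objective; lra.
Qed.
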